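(* If $G$ is a maximal subgroup of a finite semigroup $S$, then $\mathrm{EQN\text{-}SAT}(G)\le_{\mathrm m}^{\mathsf{AC}^0}\mathrm{EQN\text{-}SAT}(S)$.
   Context: A maximal subgroup of a semigroup $S$ is a subsemigroup that is a group and is maximal under inclusion among such (equivalently, the $\mathcal{H}$-class of an idempotent). For a group $G$, $\mathrm{EQN\text{-}SAT}(G)$: given a word $\alpha$ over $G\cup\mathcal{X}\cup\mathcal{X}^{-1}$ (variables and formal inverses), decide whether there is $\sigma:\mathcal{X}\to G$ with $\sigma(\alpha)=1$. For a semigroup $S$, $\mathrm{EQN\text{-}SAT}(S)$: given two words over $S\cup\mathcal{X}$, decide whether some assignment $\sigma:\mathcal{X}\to S$ makes them evaluate to the same element. $\le_{\mathrm m}^{\mathsf{AC}^0}$ denotes many-one reducibility via functions computable by polynomial-size constant-depth Boolean circuits. *)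

From mathcomp Require Import all_boot.
Set Implicit Arguments. Unset Strict Implicit. Unset Printing Implicit Defensive.

Section Semigroup.
Variables (S : finType) (op : S -> S -> S).

Definition is_identity_of (G : {set S}) (e : S) : Prop :=
  e \in G /\ forall g, g \in G -> op e g = g /\ op g e = g.

Definition is_subgroup (G : {set S}) : Prop :=
  (forall g h, g \in G -> h \in G -> op g h \in G) /\
  exists e, is_identity_of G e /\
    forall g, g \in G -> exists2 h, h \in G & op g h = e /\ op h g = e.

Definition maximal_subgroup (G : {set S}) : Prop :=
  is_subgroup G /\ forall H : {set S}, is_subgroup H -> G \subset H -> H = G.

(* A letter over G u X u X^-1 : inl g (constant, required to lie in G),
   inr (x, true) = variable x, inr (x, false) = formal inverse x^-1;
   variables are indexed by nat. *)
Definition gletter := (S + (nat * bool))%type.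

Definition ginv (G : {set S}) (e g : S) : S :=
  odflt e [pick h in G | (op g h == e) && (op h g == e)].

Definition gval (G : {set S}) (e : S) (sigma : nat -> S) (a : gletter) : S :=
  match a with
  | inl g => g
  | inr (x, true) => sigma x
  | inr (x, false) => ginv G e (sigma x)
  end.

Definition geval (G : {set S}) (e : S) (sigma : nat -> S) (w : seq gletter) : S :=
  foldr (fun a acc => op (gval G e sigma a) acc) e w.

Definition gsat (G : {set S}) (w : seq gletter) : Prop :=
  exists e, is_identity_of G e /\
    exists sigma : nat -> S, (forall x, sigma x \in G) /\ geval G e sigma w = e.

Definition sletter := (S + nat)%type.

Definition sval (sigma : nat -> S) (a : sletter) : S :=
  match a with inl s => s | inr x => sigma x end.

(* words over a semigroup are non-empty; the empty word has no value *)
Definition seval (sigma : nat -> S) (w : seq sletter) : option S :=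
  match w with
  | [::] => None
  | a :: w' => Some (foldl (fun acc b => op acc (sval sigma b)) (sval sigma a) w')
  end.

Definition ssat (u v : seq sletter) : Prop :=
  exists (sigma : nat -> S) (s : S), seval sigma u = Some s /\ seval sigma v = Some s.

(* Letter codes (tag in the two low-order bits):
   group instance:     g |-> 4 * rank g,  x |-> 4x+1,  x^-1 |-> 4x+2
   semigroup instance: s |-> 4 * rank s,  x |-> 4x+1,  separator |-> 2 *)
Definition gcode (a : gletter) : nat :=
  match a with
  | inl g => 4 * enum_rank g
  | inr (x, true) => 4 * x + 1
  | inr (x, false) => 4 * x + 2
  end.

Definition scode (a : option sletter) : nat :=
  match a with
  | None => 2
  | Some (inl s) => 4 * enum_rank s
  | Some (inr x) => 4 * x + 1
  end.

End Semigroup.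

Definition bits (w n : nat) : seq bool := mkseq (fun i => odd (n %/ 2 ^ i)) w.

(* encoding of a sequence of codes with block width w (w > 0, codes < 2^w):
   1^w 0 followed by the w-bit blocks *)
Definition enc (w : nat) (cs : seq nat) : seq bool :=
  nseq w true ++ false :: flatten (map (bits w) cs).

Definition EQN_SAT_group (S : finType) (op : S -> S -> S) (G : {set S})
    (x : seq bool) : Prop :=
  exists (w : nat) (a : seq (gletter S)),
    [/\ 0 < w, all (fun l => gcode l < 2 ^ w) a,
        all (fun l => if l is inl g then g \in G else true) a,
        x = enc w (map (@gcode S) a) & gsat op G a].

(* The language EQN-SAT(S) as a set of bit strings; the instance (u, v)
   is written u # v *)
Definition EQN_SAT_semigroup (S : finType) (op : S -> S -> S)
    (x : seq bool) : Prop :=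
  exists (w : nat) (u v : seq (sletter S)),
    let cs := map (@scode S) (map Some u ++ None :: map Some v) in
    [/\ 0 < w, all (fun c => c < 2 ^ w) cs, x = enc w cs & ssat op u v].

(* Boolean circuits with unbounded fan-in (as formulas; constant-depth  *)
(* polynomial-size circuits and formulas define the same class)         *)
Inductive circuit : Type :=
  | CIn of nat
  | CConst of bool
  | CNot of circuit
  | CAnd of seq circuit
  | COr of seq circuit.

Fixpoint ceval (x : seq bool) (c : circuit) : bool :=
  match c with
  | CIn i => nth false x i
  | CConst b => b
  | CNot c' => ~~ ceval x c'
  | CAnd cs => all (ceval x) cs
  | COr cs => has (ceval x) cs
  end.

Fixpoint csize (c : circuit) : nat :=
  match c with
  | CIn _ | CConst _ => 1
  | CNot c' => (csize c').+1
  | CAnd cs | COr cs => (sumn (map csize cs)).+1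
  end.

Fixpoint cdepth (c : circuit) : nat :=
  match c with
  | CIn _ | CConst _ => 0
  | CNot c' => (cdepth c').+1
  | CAnd cs | COr cs => (foldr maxn 0 (map cdepth cs)).+1
  end.

(* f is computable by a (non-uniform) family of polynomial-size,
   constant-depth circuits: for inputs of length n there are m n pairs of
   circuits (V n i, B n i); V n i decides whether i < |f x| and B n i gives
   bit i of f x. *)
Definition AC0_function (f : seq bool -> seq bool) : Prop :=
  exists (d k : nat) (m : nat -> nat) (V B : nat -> nat -> circuit),
    (forall n, \sum_(i < m n) (csize (V n i) + csize (B n i)) <= (n + 2) ^ k) /\
    (forall n i, i < m n -> cdepth (V n i) <= d /\ cdepth (B n i) <= d) /\
    (forall x : seq bool,
       size (f x) <= m (size x) /\
       forall i, i < m (size x) ->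
         ceval x (V (size x) i) = (i < size (f x)) /\
         (i < size (f x) -> ceval x (B (size x) i) = nth false (f x) i)).

Definition AC0_reducible (L1 L2 : seq bool -> Prop) : Prop :=
  exists f, AC0_function f /\ forall x, L1 x <-> L2 (f x).

(* Let e be the identity of G.  The units of the finite monoid eSe form a subgroup
   containing G, hence equal to G by maximality; and in a finite monoid a product is a
   unit only if all its factors are.  A group equation is therefore translated into the
   semigroup equation  e a_1' ... a_k' = e,  where a constant g stays g, a variable x
   becomes e x e and x^-1 becomes (e x e)^(N-1) with N = 2 |S|!, a multiple of the order
   of every element of G: a solution in S projects through s |-> e s e to a solution in G.
   Every letter is translated into a block of the same length and the equation is padded
   to a length depending only on the input length, so each output bit is a fixed function
   of a few input bits, chosen by a disjunction over the possible code widths of the input;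
   this gives constant-depth polynomial-size circuits. *)

From Pilot Require Import Defs.
From mathcomp Require Import all_boot zify.
Set Implicit Arguments. Unset Strict Implicit. Unset Printing Implicit Defensive.

(** * Binary encodings *)

Lemma bitsS w n : bits w.+1 n = odd n :: bits w n./2.
Proof.
rewrite /bits /mkseq /= expn0 divn1; congr (_ :: _).
rewrite (iotaDl 1 0) -map_comp; apply: eq_map => i /=.
by rewrite expnS divnMA divn2.
Qed.

Lemma size_bits w n : size (bits w n) = w.
Proof. by rewrite size_mkseq. Qed.

Lemma nth_bits w n i : i < w -> nth false (bits w n) i = odd (n %/ 2 ^ i).
Proof. by move=> lt_i_w; rewrite nth_mkseq. Qed.

Fixpoint nat_of_bits (ds : seq bool) : nat :=
  if ds is d :: ds' then d + (nat_of_bits ds').*2 else 0.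

Lemma bitsK w n : n < 2 ^ w -> nat_of_bits (bits w n) = n.
Proof.
elim: w n => [|w IHw] n lt_n.
  by move: lt_n; rewrite expn0 ltnS leqn0 => /eqP ->.
rewrite bitsS /= IHw ?odd_double_half //.
by rewrite ltn_half_double -mul2n -expnS.
Qed.

Lemma nat_of_bitsK ds : bits (size ds) (nat_of_bits ds) = ds.
Proof.
elim: ds => [|d ds IHds] //=.
by rewrite bitsS half_bit_double IHds oddD odd_double oddb addbF.
Qed.

Lemma nat_of_bits_lt ds : nat_of_bits ds < 2 ^ size ds.
Proof.
elim: ds => [|d ds IHds] //=; rewrite expnS.
have : d <= 1 by case: d.
lia.
Qed.

Lemma bits_inj w c c' : c < 2 ^ w -> c' < 2 ^ w -> bits w c = bits w c' -> c = c'.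
Proof. by move=> lt_c lt_c' eq_bits; rewrite -(bitsK lt_c) -(bitsK lt_c') eq_bits. Qed.

Section UniformFlatten.
Variables (T : eqType) (k : nat) (ss : seq (seq T)).
Hypothesis size_ss : forall s, s \in ss -> size s = k.

Lemma size_flatten_uniform : size (flatten ss) = k * size ss.
Proof.
elim: ss size_ss => [|s ss' IHss] /= sizes; first by rewrite muln0.
rewrite size_cat sizes ?mem_head // IHss ?mulnS // => s' ss's'.
by apply: sizes; rewrite inE ss's' orbT.
Qed.

Lemma nth_flatten_uniform x0 t r : t < size ss -> r < k ->
  nth x0 (flatten ss) (t * k + r) = nth x0 (nth [::] ss t) r.
Proof.
elim: ss size_ss t => [|s ss' IHss] sizes t //= lt_t lt_r.
have size_s : size s = k by apply: sizes; rewrite mem_head.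
rewrite nth_cat size_s; case: t lt_t => [|t] lt_t /=; first by rewrite lt_r.
rewrite ifN; last by rewrite -leqNgt mulSn -addnA leq_addr.
rewrite mulSn -addnA addKn IHss // => s' ss's'.
by apply: sizes; rewrite inE ss's' orbT.
Qed.

End UniformFlatten.

Definition block_pos w t r := w.+1 + (t * w + r).

Lemma size_enc w cs : size (enc w cs) = w.+1 + w * size cs.
Proof.
rewrite /enc size_cat size_nseq /= (@size_flatten_uniform _ w) ?size_map ?addnS //.
by move=> s /mapP [c _ ->]; rewrite size_bits.
Qed.

Lemma nth_enc_header w cs i : i < w -> nth false (enc w cs) i = true.
Proof. by move=> lt_i_w; rewrite /enc nth_cat size_nseq lt_i_w nth_nseq lt_i_w. Qed.

Lemma nth_enc_sep w cs : nth false (enc w cs) w = false.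
Proof. by rewrite /enc nth_cat size_nseq ltnn subnn. Qed.

Lemma nth_enc_block w cs t r : t < size cs -> r < w ->
  nth false (enc w cs) (block_pos w t r) = odd (nth 0 cs t %/ 2 ^ r).
Proof.
move=> lt_t lt_r; rewrite /enc /block_pos nth_cat size_nseq ifN; last by lia.
have -> : w.+1 + (t * w + r) - w = (t * w + r).+1 by lia.
rewrite /= nth_flatten_uniform ?size_map //; last first.
  by move=> s /mapP [c _ ->]; rewrite size_bits.
by rewrite (nth_map 0) // nth_bits.
Qed.

Definition block_code (x : seq bool) w t :=
  nat_of_bits (mkseq (fun r => nth false x (block_pos w t r)) w).

Lemma block_code_lt x w t : block_code x w t < 2 ^ w.
Proof.
by have := nat_of_bits_lt (mkseq (fun r => nth false x (block_pos w t r)) w); rewrite size_mkseq.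
Qed.

Lemma odd_block_code x w t r :
  odd (block_code x w t %/ 2 ^ r) = (r < w) && nth false x (block_pos w t r).
Proof.
case: (ltnP r w) => [lt_r | le_w_r] /=.
  have := nat_of_bitsK (mkseq (fun r => nth false x (block_pos w t r)) w).
  rewrite size_mkseq => /(congr1 (fun s => nth false s r)).
  by rewrite nth_bits // nth_mkseq.
rewrite divn_small //; apply: leq_trans (block_code_lt x w t) _; exact: leq_pexp2l.
Qed.

Lemma block_code_enc w cs t : all (fun c => c < 2 ^ w) cs -> t < size cs ->
  block_code (enc w cs) w t = nth 0 cs t.
Proof.
move=> cs_lt lt_t.
have lt_c : nth 0 cs t < 2 ^ w by apply: (allP cs_lt); exact: mem_nth.
apply: (bits_inj (block_code_lt _ _ _) lt_c); apply: (@eq_from_nth _ false).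
  by rewrite !size_bits.
by move=> r; rewrite size_bits => lt_r; rewrite !nth_bits // odd_block_code lt_r nth_enc_block.
Qed.

Lemma enc_inj w w' cs cs' : 0 < w -> 0 < w' ->
  all (fun c => c < 2 ^ w) cs -> all (fun c => c < 2 ^ w') cs' ->
  enc w cs = enc w' cs' -> w = w' /\ cs = cs'.
Proof.
move=> w_gt0 w'_gt0 cs_lt cs'_lt eq_enc.
have eq_w : w = w'.
  case: (ltngtP w w') => // lt_w.
    by have := nth_enc_sep w cs; rewrite eq_enc nth_enc_header.
  by have := nth_enc_sep w' cs'; rewrite -eq_enc nth_enc_header.
subst w'; split => //.
have eq_size : size cs = size cs'.
  apply/eqP; have := congr1 size eq_enc.
  by rewrite !size_enc => /eqP; rewrite eqn_add2l eqn_pmul2l.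
apply: (@eq_from_nth _ 0) => // t lt_t.
by rewrite -(block_code_enc cs_lt lt_t) eq_enc block_code_enc // -eq_size.
Qed.

(** * The local monoid eSe and its group of units *)

Section LocalMonoid.
Variables (S : finType) (op : S -> S -> S) (e : S).
Hypotheses (op_assoc : associative op) (e_idem : op e e = e).

Definition local_monoid := [set z | (op e z == z) && (op z e == z)].

Lemma local_monoidP z : reflect (op e z = z /\ op z e = z) (z \in local_monoid).
Proof. by rewrite inE; apply: (iffP andP) => [[/eqP -> /eqP ->] | [-> ->]]. Qed.

Lemma local_monoid_id : e \in local_monoid.
Proof. exact/local_monoidP. Qed.

Lemma local_monoidM y z : y \in local_monoid -> z \in local_monoid -> op y z \in local_monoid.
Proof.
move=> /local_monoidP [ey ye] /local_monoidP [ez ze].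
by apply/local_monoidP; rewrite op_assoc ey -op_assoc ze.
Qed.

Lemma foldr_local_monoid zs : all (mem local_monoid) zs -> foldr op e zs \in local_monoid.
Proof.
elim: zs => [|z zs IHzs] /=; first by rewrite local_monoid_id.
by case/andP=> z_in /IHzs; exact: local_monoidM.
Qed.

(* In the finite monoid eSe left multiplication by [t] is injective, hence onto. *)
Lemma local_monoid_rinv z t : z \in local_monoid -> t \in local_monoid ->
  op z t = e -> op t z = e.
Proof.
move=> z_in t_in zt.
have inj_t : {in local_monoid &, injective (op t)}.
  move=> m1 m2 /local_monoidP [em1 _] /local_monoidP [em2 _] /(congr1 (op z)).
  by rewrite !op_assoc zt em1 em2.
have onto_t : op t @: local_monoid = local_monoid.
  apply/eqP; rewrite eqEcard card_in_imset // leqnn andbT.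
  by apply/subsetP=> _ /imsetP [m m_in ->]; exact: local_monoidM.
have /imsetP [c c_in tc] : e \in op t @: local_monoid by rewrite onto_t local_monoid_id.
suff -> : z = c by [].
move: z_in c_in => /local_monoidP [_ ze] /local_monoidP [ec _].
by rewrite -ze tc op_assoc zt ec.
Qed.

Definition local_units :=
  [set z in local_monoid | [exists t in local_monoid, (op z t == e) && (op t z == e)]].

Lemma local_unitsP z : z \in local_units ->
  z \in local_monoid /\ exists2 t, t \in local_units & op z t = e /\ op t z = e.
Proof.
rewrite inE => /andP [z_in /existsP [t /and3P [t_in /eqP zt /eqP tz]]].
split=> //; exists t => //.
by rewrite inE t_in; apply/existsP; exists z; rewrite z_in zt tz !eqxx.
Qed.

Lemma local_units_rinv z t : z \in local_monoid -> t \in local_monoid ->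
  op z t = e -> z \in local_units.
Proof.
move=> z_in t_in zt; rewrite inE z_in; apply/existsP; exists t.
by rewrite t_in zt (local_monoid_rinv z_in t_in zt) !eqxx.
Qed.

Lemma local_units_monoid z : z \in local_units -> z \in local_monoid.
Proof. by case/local_unitsP. Qed.

Lemma local_unitsM y z : y \in local_units -> z \in local_units -> op y z \in local_units.
Proof.
move=> /local_unitsP [y_in [y' y'_in [yy' _]]] /local_unitsP [z_in [z' z'_in [zz' _]]].
have y'_mon := local_units_monoid y'_in; have z'_mon := local_units_monoid z'_in.
apply: (@local_units_rinv _ (op z' y')); rewrite ?local_monoidM //.
have /local_monoidP [ey' _] := y'_mon.
by rewrite -op_assoc (op_assoc z) zz' ey'.
Qed.

Lemma local_units_subgroup : is_subgroup op local_units.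
Proof.
split; first exact: local_unitsM.
exists e; split; last by move=> g /local_unitsP [_ [t t_in inv_t]]; exists t.
split; first exact: (local_units_rinv local_monoid_id local_monoid_id).
by move=> g /local_units_monoid /local_monoidP.
Qed.

Lemma local_units_factors zs : all (mem local_monoid) zs ->
  foldr op e zs \in local_units -> all (mem local_units) zs.
Proof.
elim: zs => [|z zs IHzs] //= /andP [z_in zs_in] /local_unitsP [_ [p' p'_in [zp _]]].
have p_in := foldr_local_monoid zs_in.
have z_unit : z \in local_units.
  apply: (@local_units_rinv _ (op (foldr op e zs) p')); rewrite ?op_assoc //.
  exact/local_monoidM/local_units_monoid.
rewrite z_unit IHzs //.
have [_ [z' z'_in [_ z'z]]] := local_unitsP z_unit.
have /local_monoidP [ep _] := p_in.
have -> : foldr op e zs = op z' (op z (foldr op e zs)) by rewrite op_assoc z'z ep.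
apply: local_unitsM => //.
exact: (local_units_rinv (local_monoidM z_in p_in) (local_units_monoid p'_in)).
Qed.

Definition mpow y k := iter k (op y) e.

Lemma mpow_nseq y k : mpow y k = foldr op e (nseq k y).
Proof. by elim: k => //= k ->. Qed.

Lemma mpow_local_monoid y k : y \in local_monoid -> mpow y k \in local_monoid.
Proof.
by move=> y_in; elim: k => [|k IHk] /=; [exact: local_monoid_id | exact: local_monoidM].
Qed.

Lemma mpow_local_units y k : y \in local_units -> mpow y k \in local_units.
Proof.
move=> y_unit; elim: k => [|k IHk] /=; last exact: local_unitsM.
exact: (local_units_rinv local_monoid_id local_monoid_id).
Qed.

Lemma mpowD y m n : y \in local_monoid -> mpow y (m + n) = op (mpow y m) (mpow y n).
Proof.
move=> y_in; elim: m => [|m IHm] /=; last by rewrite IHm op_assoc.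
by have /local_monoidP [-> _] := mpow_local_monoid n y_in.
Qed.

Lemma mpowSr y k : y \in local_monoid -> mpow y k.+1 = op (mpow y k) y.
Proof. by move=> y_in; rewrite -addn1 mpowD //=; have /local_monoidP [_ ->] := y_in. Qed.

Lemma mpow_period y : y \in local_units -> exists2 d, 0 < d <= #|S| & mpow y d = e.
Proof.
move=> y_unit; have [y_in [y' y'_in [_ y'y]]] := local_unitsP y_unit.
have cancel_pow a d : mpow y (a + d) = mpow y a -> mpow y d = e.
  elim: a => [|a IHa] // /(congr1 (op y')); rewrite /= !op_assoc y'y.
  by have [/local_monoidP [-> _] /local_monoidP [-> _]] :=
    (mpow_local_monoid (a + d) y_in, mpow_local_monoid a y_in); exact: IHa.
have /injectivePn [i [j neq_ij eq_ij]] : ~~ injectiveb (fun i : 'I_#|S|.+1 => mpow y i).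
  by apply/injectiveP => /leq_card; rewrite card_ord ltnn.
case: (ltngtP i j) => [lt_ij | lt_ji | eq_ij']; last by rewrite (val_inj eq_ij') eqxx in neq_ij.
- exists (j - i); first by have := ltn_ord j; lia.
  by apply: (cancel_pow i); rewrite subnKC ?(ltnW lt_ij).
- exists (i - j); first by have := ltn_ord i; lia.
  by apply: (cancel_pow j); rewrite subnKC ?(ltnW lt_ji).
Qed.

(* The factor 2 keeps [inv_exp] positive when [#|S| = 1]. *)
Definition inv_exp := (2 * #|S|`!).-1.

Lemma inv_exp_gt0 : 0 < inv_exp.
Proof. by rewrite /inv_exp; have := fact_gt0 #|S|; lia. Qed.

Lemma mpow_inv_exp y : y \in local_units ->
  op y (mpow y inv_exp) = e /\ op (mpow y inv_exp) y = e.
Proof.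
move=> y_unit; have y_in := local_units_monoid y_unit.
have exp_e : mpow y inv_exp.+1 = e.
  have [d /andP [d_gt0 le_d] yd] := mpow_period y_unit.
  have /dvdnP [q ->] : d %| inv_exp.+1.
    by rewrite /inv_exp prednK ?dvdn_mull ?dvdn_fact //; have := fact_gt0 #|S|; lia.
  elim: q => [|q IHq] //; by rewrite mulSn mpowD // yd IHq e_idem.
by split; rewrite -?mpowSr.
Qed.

End LocalMonoid.

Section MaximalSubgroup.
Variables (S : finType) (op : S -> S -> S) (G : {set S}) (e : S).
Hypotheses (op_assoc : associative op) (maxG : maximal_subgroup op G)
  (e_id : is_identity_of op G e).

Lemma identity_idem : op e e = e.
Proof. by case: e_id => e_in /(_ e e_in) []. Qed.

Lemma identity_of_uniq e' : is_identity_of op G e' -> e' = e.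
Proof.
case=> e'_in e'_id; case: e_id => e_in /(_ e' e'_in) [ee' _].
by case: (e'_id e e_in) => _ e'e; rewrite -ee' e'e.
Qed.

Lemma subgroup_local_monoid g : g \in G -> g \in local_monoid op e.
Proof. by case: e_id => _ /(_ g) id_g /id_g [eg ge]; exact/local_monoidP. Qed.

Lemma local_units_maximal : local_units op e = G.
Proof.
case: maxG => [[_ [e' [e'_id inv]]] max]; move: inv; rewrite (identity_of_uniq e'_id) => inv.
apply: max; first exact: (local_units_subgroup op_assoc identity_idem).
apply/subsetP => g g_in; have [h h_in [gh _]] := inv g g_in.
exact: (local_units_rinv op_assoc identity_idem (subgroup_local_monoid g_in)
  (subgroup_local_monoid h_in) gh).
Qed.

Lemma subgroup_factors zs : all (mem (local_monoid op e)) zs ->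
  foldr op e zs \in G -> all (mem G) zs.
Proof. rewrite -local_units_maximal; exact: (local_units_factors op_assoc identity_idem). Qed.

Lemma ginv_mpow y : y \in G -> ginv op G e y = mpow op e y (inv_exp S).
Proof.
rewrite -local_units_maximal => y_unit; set p := mpow op e y (inv_exp S).
have [yp py] := mpow_inv_exp op_assoc identity_idem y_unit.
have p_unit : p \in local_units op e := mpow_local_units op_assoc identity_idem _ y_unit.
rewrite /ginv; case: pickP => [h /and3P [h_unit /eqP yh /eqP hy] | no_inv] /=.
  have /local_monoidP [_ he] := local_units_monoid h_unit.
  have /local_monoidP [ep _] := local_units_monoid p_unit.
  by rewrite -he -yp op_assoc hy ep.
by have := no_inv p; rewrite p_unit yp py !eqxx.
Qed.

End MaximalSubgroup.

(** * Translating group equations into semigroup equations *)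

Section Translation.
Variables (S : finType) (e : S).

Definition block_len := 3 * inv_exp S.

Lemma block_len_gt0 : 0 < block_len.
Proof. by rewrite /block_len muln_gt0 inv_exp_gt0. Qed.

Definition letter_block (l : gletter S) : seq (sletter S) :=
  match l with
  | inl g => inl g :: nseq block_len.-1 (inl e)
  | inr (x, true) => [:: inl e; inr x; inl e] ++ nseq (block_len - 3) (inl e)
  | inr (x, false) => flatten (nseq (inv_exp S) [:: inl e; inr x; inl e])
  end.

Lemma size_letter_block l : size (letter_block l) = block_len.
Proof.
have := inv_exp_gt0 S.
case: l => [g|[x []]] exp_gt0 /=; rewrite /block_len.
- by rewrite size_nseq; lia.
- by rewrite size_nseq; lia.
- by rewrite (@size_flatten_uniform _ 3) ?size_nseq // => s /nseqP [->].
Qed.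

Lemma size_flatten_letter_blocks a :
  size (flatten (map letter_block a)) = block_len * size a.
Proof.
rewrite (@size_flatten_uniform _ block_len) ?size_map //.
by move=> s /mapP [l _ ->]; rewrite size_letter_block.
Qed.

(* The padding makes the position of every output letter depend on [n] only. *)
Definition translate (a : seq (gletter S)) n : seq (sletter S) :=
  inl e :: flatten (map letter_block a) ++ nseq (block_len * (n - size a)) (inl e).

Lemma size_translate a n : size a <= n -> size (translate a n) = (block_len * n).+1.
Proof.
by move=> le_a_n; rewrite /= size_cat size_nseq size_flatten_letter_blocks -mulnDr subnKC.
Qed.

End Translation.

Section TranslationCorrect.
Variables (S : finType) (op : S -> S -> S) (G : {set S}) (e : S).
Hypotheses (op_assoc : associative op) (maxG : maximal_subgroup op G)
  (e_id : is_identity_of op G e).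

Local Notation eSe := (local_monoid op e).
Let e_idem := identity_idem e_id.

Definition sandwich s := op (op e s) e.

Definition letter_value (sigma : nat -> S) (l : gletter S) : S :=
  match l with
  | inl g => g
  | inr (x, true) => sandwich (sigma x)
  | inr (x, false) => mpow op e (sandwich (sigma x)) (inv_exp S)
  end.

Definition letter_over (l : gletter S) := if l is inl g then g \in G else true.

Lemma sandwich_local_monoid s : sandwich s \in eSe.
Proof. by apply/local_monoidP; rewrite /sandwich -!op_assoc e_idem !op_assoc e_idem. Qed.

Lemma letter_value_local_monoid sigma l : letter_over l -> letter_value sigma l \in eSe.
Proof.
case: l => [g|[x []]] /= l_over; first exact: (subgroup_local_monoid e_id).
  exact: sandwich_local_monoid.
exact: (mpow_local_monoid op_assoc e_idem _ (sandwich_local_monoid _)).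
Qed.

Lemma letter_values_local_monoid sigma a : all letter_over a ->
  all (mem eSe) (map (letter_value sigma) a).
Proof.
move=> a_over; rewrite all_map; apply/allP => l l_in.
exact/letter_value_local_monoid/(allP a_over).
Qed.

Section Evaluation.
Variable sigma : nat -> S.

Local Notation step := (fun acc (b : sletter S) => op acc (Defs.sval sigma b)).

Lemma foldl_padding acc k : op acc e = acc -> foldl step acc (nseq k (inl e)) = acc.
Proof. by move=> acc_e; elim: k => //= k; rewrite acc_e. Qed.

Lemma foldl_sandwiches acc k x : op acc e = acc ->
  foldl step acc (flatten (nseq k [:: inl e; inr x; inl e]))
  = op acc (mpow op e (sandwich (sigma x)) k).
Proof.
elim: k acc => [|k IHk] acc acc_e /=; first by rewrite acc_e.
rewrite IHk; last by rewrite /= -!op_assoc e_idem.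
by rewrite /sandwich /= -!op_assoc.
Qed.

Lemma foldl_letter_block acc l : op acc e = acc -> letter_over l ->
  foldl step acc (letter_block e l) = op acc (letter_value sigma l).
Proof.
move=> acc_e l_over; have /local_monoidP [_ le] := letter_value_local_monoid sigma l_over.
case: l l_over le => [g|[x []]] l_over le /=.
- by rewrite foldl_padding // /= -op_assoc le.
- have -> : op (op (op acc e) (sigma x)) e = op acc (sandwich (sigma x)).
    by rewrite /sandwich !op_assoc.
  by rewrite foldl_padding // -op_assoc le.
- exact: foldl_sandwiches.
Qed.

Lemma foldl_letter_blocks acc a : op acc e = acc -> all letter_over a ->
  foldl step acc (flatten (map (letter_block e) a))
  = op acc (foldr op e (map (letter_value sigma) a)).
Proof.
elim: a acc => [|l a IHa] acc acc_e /=; first by rewrite acc_e.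
case/andP=> l_over a_over; have /local_monoidP [_ le] := letter_value_local_monoid sigma l_over.
by rewrite foldl_cat foldl_letter_block // IHa -?op_assoc ?le.
Qed.

Lemma seval_translate a n : all letter_over a ->
  seval op sigma (translate e a n) = Some (foldr op e (map (letter_value sigma) a)).
Proof.
move=> a_over; rewrite /translate /seval /= foldl_cat foldl_letter_blocks //.
have /local_monoidP [eP Pe] :=
  foldr_local_monoid op_assoc e_idem (letter_values_local_monoid sigma a_over).
by rewrite eP foldl_padding.
Qed.

End Evaluation.

Lemma letter_value_gval sigma l : (forall x, sigma x \in G) ->
  letter_value sigma l = gval op G e sigma l.
Proof.
move=> sigma_G; case: l => [g|[x []]] //=;
  have /local_monoidP [ex xe] := subgroup_local_monoid e_id (sigma_G x).
- by rewrite /sandwich ex xe.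
- by rewrite (ginv_mpow op_assoc maxG e_id (sigma_G x)) /sandwich ex xe.
Qed.

Lemma translate_sat a n : all letter_over a ->
  gsat op G a -> ssat op (translate e a n) [:: inl e].
Proof.
move=> a_over [e' [/(identity_of_uniq e_id) -> [sigma [sigma_G sat]]]].
exists sigma, e; split => //; rewrite seval_translate // -[X in _ = Some X]sat.
by congr Some; elim: a {a_over sat} => //= l a ->; rewrite letter_value_gval.
Qed.

Lemma subgroup_of_mpow y k : 0 < k -> y \in eSe -> mpow op e y k \in G -> y \in G.
Proof.
case: k => // k _ y_in; rewrite mpow_nseq => /(subgroup_factors op_assoc maxG e_id).
by rewrite all_nseq /= y_in => /(_ isT) /andP [].
Qed.

Definition subgroup_assignment (sigma : nat -> S) x :=
  if sandwich (sigma x) \in G then sandwich (sigma x) else e.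

Lemma gval_subgroup_assignment sigma l : letter_value sigma l \in G ->
  gval op G e (subgroup_assignment sigma) l = letter_value sigma l.
Proof.
rewrite /subgroup_assignment; case: l => [g|[x []]] //= value_G; first by rewrite value_G.
have sandwich_G := subgroup_of_mpow (inv_exp_gt0 S) (sandwich_local_monoid _) value_G.
by rewrite sandwich_G (ginv_mpow op_assoc maxG e_id sandwich_G).
Qed.

Lemma sat_translate a n : all letter_over a ->
  ssat op (translate e a n) [:: inl e] -> gsat op G a.
Proof.
move=> a_over [sigma [s [sat_l /= [es]]]].
move: sat_l; rewrite -es seval_translate // => -[prod_e].
have e_G : e \in G by case: e_id.
have values_G : all (mem G) (map (letter_value sigma) a).
  by apply: (subgroup_factors op_assoc maxG e_id); rewrite ?prod_e ?letter_values_local_monoid.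
exists e; split => //; exists (subgroup_assignment sigma); split.
  by move=> x; rewrite /subgroup_assignment; case: ifP.
rewrite -[X in _ = X]prod_e.
elim: a {a_over prod_e} values_G => //= l a IHa /andP [l_G /IHa <-].
by rewrite gval_subgroup_assignment.
Qed.

End TranslationCorrect.

(** * Circuits reading encoded inputs *)

Definition block_bit w t r := if r < w then CIn (block_pos w t r) else CConst false.

Lemma ceval_block_bit x w t r : ceval x (block_bit w t r) = odd (block_code x w t %/ 2 ^ r).
Proof. by rewrite odd_block_code /block_bit; case: ifP. Qed.

Definition block_eq w t c :=
  CAnd (mkseq (fun r => let b := CIn (block_pos w t r) in
                        if odd (c %/ 2 ^ r) then b else CNot b) w).

Lemma ceval_block_eq x w t c : c < 2 ^ w -> ceval x (block_eq w t c) = (block_code x w t == c).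
Proof.
move=> lt_c /=; rewrite all_map.
apply/allP/eqP => [bits_eq | <- r]; last first.
  rewrite mem_iota add0n => /andP [_ lt_r] /=; rewrite odd_block_code lt_r /=.
  by case bit_r: (nth false x _) => /=; rewrite bit_r.
apply: (bits_inj (block_code_lt _ _ _) lt_c); apply: (@eq_from_nth _ false).
  by rewrite !size_bits.
move=> r; rewrite size_bits => lt_r; have := bits_eq r; rewrite mem_iota add0n lt_r /= => /(_ isT).
by rewrite !nth_bits // odd_block_code lt_r /=; case: ifP => _ /= => [-> | /negbTE ->].
Qed.

Definition header w := CAnd (CNot (CIn w) :: mkseq CIn w).


Lemma ceval_header x w :
  ceval x (header w) = ~~ nth false x w && all (nth false x) (iota 0 w).
Proof. by rewrite /= all_map. Qed.

Lemma header_enc w w' cs : 0 < w' -> ceval (enc w' cs) (header w) = (w == w').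
Proof.
move=> w'_gt0; rewrite ceval_header.
case: (ltngtP w w') => [lt_w | lt_w' | ->].
- by rewrite nth_enc_header.
- apply/negbTE/negP => /andP [_ /allP all_true].
  by have := all_true w'; rewrite mem_iota lt_w' nth_enc_sep /= => /(_ isT).
- rewrite nth_enc_sep /=; apply/allP=> i; rewrite mem_iota /= => lt_i.
  exact: nth_enc_header.
Qed.

Lemma ceval_CAnd x cs : ceval x (CAnd cs) = all (ceval x) cs.
Proof. by []. Qed.

Lemma ceval_COr x cs : ceval x (COr cs) = has (ceval x) cs.
Proof. by []. Qed.

Lemma all_cons T (p : pred T) x s : all p (x :: s) = p x && all p s.
Proof. by []. Qed.

Lemma ceval_CAnd2 x c1 c2 : ceval x (CAnd [:: c1; c2]) = ceval x c1 && ceval x c2.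
Proof. by rewrite /= andbT. Qed.

Lemma has_ceval_mapP (T : eqType) x (f : T -> circuit) s :
  reflect (exists2 y, y \in s & ceval x (f y)) (has (ceval x) (map f s)).
Proof. by rewrite has_map; apply: hasP. Qed.

Lemma all_ceval_mapP (T : eqType) x (f : T -> circuit) s :
  reflect (forall y, y \in s -> ceval x (f y)) (all (ceval x) (map f s)).
Proof. by rewrite all_map; apply: allP. Qed.

Section CircuitSize.
Variable X : nat.
Hypothesis X_gt1 : 1 < X.

Lemma sumn_csize_le cs a b : size cs <= X ^ a ->
  all (fun c => csize c <= X ^ b) cs -> sumn (map csize cs) <= X ^ (a + b).
Proof.
move=> size_cs cs_small; rewrite expnD; apply: leq_trans (leq_mul size_cs (leqnn _)).
elim: cs cs_small {size_cs} => [|c cs IHcs] //= /andP [c_small /IHcs].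
by rewrite mulSn; exact: leq_add.
Qed.

Lemma succ_le_pow m k : m <= X ^ k -> m.+1 <= X ^ k.+1.
Proof.
move=> le_m; rewrite expnS; apply: leq_trans (_ : 2 * X ^ k <= _).
  by have := expn_gt0 X k; rewrite (ltnW X_gt1) /=; lia.
by rewrite leq_mul2r X_gt1 orbT.
Qed.

Lemma csize_le_pow c k l : csize c <= X ^ k -> k <= l -> csize c <= X ^ l.
Proof. by move=> le_c le_kl; apply: leq_trans le_c _; rewrite leq_pexp2l // ltnW. Qed.

Lemma csize_CNot c k : csize c <= X ^ k -> csize (CNot c) <= X ^ k.+1.
Proof. exact: succ_le_pow. Qed.

Lemma csize_CAnd cs a b k : size cs <= X ^ a ->
  all (fun c => csize c <= X ^ b) cs -> a + b < k -> csize (CAnd cs) <= X ^ k.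
Proof.
move=> size_cs cs_small lt_k; apply: (@csize_le_pow _ (a + b).+1) => //.
exact/succ_le_pow/sumn_csize_le.
Qed.

Lemma csize_COr cs a b k : size cs <= X ^ a ->
  all (fun c => csize c <= X ^ b) cs -> a + b < k -> csize (COr cs) <= X ^ k.
Proof. exact: csize_CAnd. Qed.

End CircuitSize.

Lemma cdepth_CAnd cs d : all (fun c => cdepth c <= d) cs -> cdepth (CAnd cs) <= d.+1.
Proof.
rewrite /= ltnS; elim: cs => [|c cs IHcs] //= /andP [c_small /IHcs].
by rewrite geq_max c_small.
Qed.

Lemma cdepth_COr cs d : all (fun c => cdepth c <= d) cs -> cdepth (COr cs) <= d.+1.
Proof. exact: cdepth_CAnd. Qed.

Lemma add_le_pow2 n c : n + c <= (n + 2) ^ c.+1.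
Proof.
rewrite expnSr; have lt_c : c < 2 ^ c := ltn_expl c (isT : 1 < 2).
have le_pow : 2 ^ c <= (n + 2) ^ c.
  by elim: (c) => // k IHk; rewrite !expnS leq_mul // leq_addl.
have : c.+1 * (n + 2) <= (n + 2) ^ c * (n + 2).
  by rewrite leq_mul2r (leq_trans lt_c le_pow) orbT.
nia.
Qed.

Lemma modn4 c : c %% 4 = odd c + 2 * odd c./2.
Proof.
have := odd_double_half c; have := odd_double_half c./2; rewrite -!muln2.
have : odd c <= 1 by case: odd.
have : odd c./2 <= 1 by case: odd.
move: (odd c) (odd c./2) (c./2) (c./2./2) => o1 o2 h q; lia.
Qed.

Lemma scode_inj (S : finType) : injective (@scode S).
Proof.
move=> [[s|x]|] [[s'|x']|] //= eq_code; try lia.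
- by congr (Some (inl _)); apply/enum_rank_inj/val_inj => /=; lia.
- by congr (Some (inr _)); lia.
Qed.

Lemma instance_codes_inj (S : finType) (u v u' v' : seq (sletter S)) :
  map (@scode S) (map Some u ++ None :: map Some v)
  = map (@scode S) (map Some u' ++ None :: map Some v') -> u = u' /\ v = v'.
Proof.
move=> /(inj_map (@scode_inj S)); elim: u u' => [|b u IHu] [|b' u'] //=.
- by case=> /(inj_map (@Some_inj _)).
- by case=> -> /IHu [-> ->].
Qed.

(** * The reduction *)

Section InputCheck.
Variables (S : finType) (G : {set S}).

Local Notation x0 := (inr (0, true) : gletter S).

Definition group_code c :=
  [|| c %% 4 == 1, c %% 4 == 2 | has (fun g => c == 4 * enum_rank g) (enum G)].

Definition decode_letter c : gletter S :=
  if c %% 4 == 2 then inr (c %/ 4, false)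
  else if [pick g in G | c == 4 * enum_rank g] is Some g then inl g
  else inr (c %/ 4, true).

Lemma decode_letterK c : group_code c ->
  gcode (decode_letter c) = c /\ letter_over G (decode_letter c).
Proof.
rewrite /group_code /decode_letter; have c_eq := divn_eq c 4.
case: ifP => [/eqP c2 _ | c_not2]; first by split => //=; lia.
case: pickP => [g /andP [g_in /eqP c_g] _ | no_g] /=; first by rewrite c_g.
case/orP => [/eqP c1 | /hasP [g g_in /eqP c_g]]; first by split => //; lia.
by have := no_g g; rewrite -mem_enum g_in c_g eqxx.
Qed.

Lemma group_code_gcode l : letter_over G l -> group_code (gcode l).
Proof.
rewrite /group_code; case: l => [g|[x []]] /= l_over.
- by apply/or3P; apply: Or33; apply/hasP; exists g; rewrite ?mem_enum.
- by apply/or3P; apply: Or31; apply/eqP; lia.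
- by apply/or3P; apply: Or32; apply/eqP; lia.
Qed.

Definition group_codes w := [seq g <- enum G | 4 * enum_rank g < 2 ^ w].

Definition code_check w t :=
  COr [:: CAnd [:: block_bit w t 0; CNot (block_bit w t 1)];
          CAnd [:: CNot (block_bit w t 0); block_bit w t 1];
          COr [seq block_eq w t (4 * enum_rank g) | g <- group_codes w]].

Lemma ceval_code_check x w t : ceval x (code_check w t) = group_code (block_code x w t).
Proof.
rewrite /code_check /group_code /= !ceval_block_bit expn0 expn1 divn1 modn4 !andbT orbF.
rewrite -divn2; congr [|| _, _ | _]; try by case: odd; case: odd.
apply/has_ceval_mapP/hasP => [[g] | [g g_in /eqP code_g]].
  rewrite mem_filter => /andP [lt_g g_in].
  by rewrite ceval_block_eq // => code_g; exists g.
exists g; first by rewrite mem_filter g_in -code_g block_code_lt.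
by rewrite ceval_block_eq -code_g ?block_code_lt.
Qed.


Definition encodes x w (a : seq (gletter S)) :=
  [/\ 0 < w, all (fun l => gcode l < 2 ^ w) a, all (letter_over G) a &
      x = enc w (map (@gcode S) a)].

Definition num_blocks n w := (n - w.+1) %/ w.

Definition valid_input n :=
  COr [seq CAnd (header w :: mkseq (code_check w) (num_blocks n w))
      | w <- iota 1 n & (w < n) && (w %| n - w.+1)].

Lemma encodes_size x w a : encodes x w a -> size x = w.+1 + w * size a.
Proof. by case=> _ _ _ ->; rewrite size_enc size_map. Qed.

Lemma encodes_num_blocks x w a : encodes x w a -> num_blocks (size x) w = size a.
Proof.
move=> enc_x; case: (enc_x) => w_gt0 _ _ _.
by rewrite /num_blocks (encodes_size enc_x) addKn mulKn.
Qed.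

Lemma valid_input_complete x w a : encodes x w a -> ceval x (valid_input (size x)).
Proof.
move=> enc_x; have size_x := encodes_size enc_x; have blocks_x := encodes_num_blocks enc_x.
case: enc_x => w_gt0 a_lt a_over x_enc.
rewrite /valid_input ceval_COr; apply/has_ceval_mapP; exists w.
  rewrite mem_filter mem_iota size_x addKn dvdn_mulr // andbT; apply/andP; split; lia.
rewrite ceval_CAnd all_cons x_enc header_enc // eqxx; apply/all_ceval_mapP => t.
rewrite -x_enc blocks_x mem_iota add0n => /andP [_ lt_t].
rewrite ceval_code_check x_enc block_code_enc ?size_map //.
  by rewrite (nth_map x0) // group_code_gcode //; exact/(allP a_over)/mem_nth.
by rewrite all_map.
Qed.

Lemma valid_input_sound x : ceval x (valid_input (size x)) -> exists w a, encodes x w a.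
Proof.
rewrite /valid_input ceval_COr => /has_ceval_mapP [w].
rewrite mem_filter mem_iota => /andP [/andP [lt_w w_dvd] /andP [w_gt0 _]].
rewrite ceval_CAnd all_cons ceval_header.
move=> /andP [/andP [sep_x /allP header_x] /all_ceval_mapP codes_x].
set L := num_blocks (size x) w.
pose a := mkseq (fun t => decode_letter (block_code x w t)) L.
have decode_a t : t < L ->
    gcode (nth x0 a t) = block_code x w t /\ letter_over G (nth x0 a t).
  move=> lt_t; rewrite nth_mkseq //; apply/decode_letterK.
  by rewrite -ceval_code_check; apply: codes_x; rewrite mem_iota.
have size_a : size a = L by rewrite size_mkseq.
clearbody a.
have size_x : size x = w.+1 + w * L by rewrite /L /num_blocks mulnC divnK //; lia.
exists w, a; split => //.
- apply/allP => l /(nthP x0) [t]; rewrite size_a => lt_t <-.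
  by rewrite (decode_a t lt_t).1 block_code_lt.
- apply/allP => l /(nthP x0) [t]; rewrite size_a => lt_t <-.
  exact: (decode_a t lt_t).2.
apply: (@eq_from_nth _ false); first by rewrite size_enc size_map size_a.
move=> i lt_i; case: (ltngtP i w) => [lt_iw | lt_wi | ->].
- by rewrite nth_enc_header // header_x // mem_iota.
- have lt_t : (i - w.+1) %/ w < L by rewrite ltn_divLR // mulnC; lia.
  have -> : i = block_pos w ((i - w.+1) %/ w) ((i - w.+1) %% w).
    by rewrite /block_pos -divn_eq; lia.
  rewrite nth_enc_block ?size_map ?size_a ?ltn_pmod //.
  rewrite (nth_map x0) ?size_a //.
  by rewrite (decode_a _ lt_t).1 odd_block_code ltn_pmod.
- by rewrite nth_enc_sep; apply/negbTE.
Qed.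

End InputCheck.

Section Reduction.
Variables (S : finType) (G : {set S}) (e : S).

Local Notation K := (block_len S).
Local Notation e_code := (scode (Some (inl e))).

Lemma nth_letter_block l s : s < K -> nth (inl e) (letter_block e l) s =
  match l with
  | inl g => if s == 0 then inl g else inl e
  | inr (x, true) => if s == 1 then inr x else inl e
  | inr (x, false) => if s %% 3 == 1 then inr x else inl e
  end.
Proof.
move=> lt_s; case: l => [g|[x []]] /=.
- by case: s lt_s => //= s _; rewrite nth_nseq; case: ifP.
- by case: s lt_s => [|[|[|s]]] //= _; rewrite nth_nseq; case: ifP.
have lt_q : s %/ 3 < inv_exp S by rewrite ltn_divLR // mulnC.
rewrite {1}(divn_eq s 3) nth_flatten_uniform ?size_nseq ?ltn_pmod //; last first.
  by move=> b /nseqP [->].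
by rewrite nth_nseq lt_q; case: (s %% 3) (ltn_pmod s (isT : 0 < 3)) => [|[|[|]]].
Qed.

(* Room for the codes [4 * enum_rank s < 2 ^ (#|S| + 2)] of constants and for the codes of
   the input, which have fewer than [n] bits. *)
Definition out_width n := n + #|S| + 2.

Lemma out_width_gt0 n : 0 < out_width n.
Proof. by rewrite /out_width addn2. Qed.

Definition out_codes a n :=
  map (@scode S) (map Some (translate e a n) ++ None :: map Some [:: inl e]).

Definition out_len n := (out_width n).+1 + out_width n * (K * n + 3).

Lemma size_out_codes a n : size a <= n -> size (out_codes a n) = K * n + 3.
Proof. by move=> le_a_n; rewrite size_map size_cat size_map size_translate //=; lia. Qed.

Lemma nth_out_codes a n q : size a <= n -> q < K * n + 3 ->
  nth 0 (out_codes a n) q =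
  if q == 0 then e_code
  else if q <= K * n then
    if q.-1 %/ K < size a
    then scode (Some (nth (inl e) (letter_block e (nth (inl e) a (q.-1 %/ K))) (q.-1 %% K)))
    else e_code
  else if q == (K * n).+1 then 2 else e_code.
Proof.
move=> le_a_n lt_q; have K_gt0 := block_len_gt0 S.
rewrite /out_codes (nth_map None); last by rewrite size_cat size_map size_translate //=; lia.
rewrite nth_cat size_map size_translate //; case: q lt_q => [|q] //= lt_q.
rewrite ltnS; case: (leqP q.+1 (K * n)) => [le_q | lt_Kn_q].
  rewrite (nth_map (inl e)) /=; last first.
    by rewrite size_cat size_flatten_letter_blocks size_nseq -mulnDr subnKC.
  rewrite nth_cat size_flatten_letter_blocks ltn_divLR // mulnC.
  case: ltnP => [lt_q_a | le_a_q]; last by rewrite nth_nseq; case: ifP.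
  have lt_t : q %/ K < size a by rewrite ltn_divLR // mulnC.
  rewrite {1}(divn_eq q K) nth_flatten_uniform ?size_map ?ltn_pmod //.
    by rewrite (nth_map (inl e)).
  by move=> b /mapP [l _ ->]; rewrite size_letter_block.
have [-> | ne_q] := eqVneq q (K * n); first by rewrite subnn eqxx.
have -> : q.+1 - (K * n).+1 = 1 by lia.
by rewrite eqSS (negPf ne_q).
Qed.

Lemma encodes_le x w a : encodes G x w a -> w < size x /\ size a <= size x.
Proof.
move=> enc_x; rewrite (encodes_size enc_x); case: enc_x => w_gt0 _ _ _.
by split; [rewrite addSn ltnS leq_addr | apply: leq_trans (leq_addl _ _); rewrite leq_pmull].
Qed.

Lemma scode_letter_block_le l s : s < K ->
  scode (Some (nth (inl e) (letter_block e l) s)) <= maxn (gcode l) e_code.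
Proof.
by move=> lt_s; rewrite nth_letter_block //; case: l => [g|[x []]] /=; case: ifP => _ /=; lia.
Qed.

Lemma e_code_lt n : e_code < 2 ^ out_width n.
Proof.
rewrite /out_width expnD (_ : 2 ^ 2 = 4) //= mulnC ltn_pmul2r //.
apply: leq_trans (ltn_ord (enum_rank e)) _; apply: ltnW.
apply: leq_trans (ltn_expl _ (isT : 1 < 2)) _.
by rewrite leq_pexp2l // leq_addl.
Qed.

Lemma out_codes_lt x w a : encodes G x w a ->
  all (fun c => c < 2 ^ out_width (size x)) (out_codes a (size x)).
Proof.
move=> enc_x; have [lt_w le_a] := encodes_le enc_x; have K_gt0 := block_len_gt0 S.
have lt_e := e_code_lt (size x).
have le_w : 2 ^ w <= 2 ^ out_width (size x) by rewrite leq_pexp2l // /out_width; lia.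
apply/(all_nthP 0) => q; rewrite size_out_codes // => lt_q; rewrite nth_out_codes //.
have lt_2 : 2 < 2 ^ out_width (size x).
  by apply: leq_trans (_ : 2 ^ 2 <= _) => //; rewrite leq_pexp2l // leq_addl.
case: ifP => // _; case: ifP => _; last by case: ifP.
case: ifP => // lt_t; apply: leq_ltn_trans (scode_letter_block_le _ (ltn_pmod _ K_gt0)) _.
rewrite gtn_max lt_e andbT; apply: leq_trans le_w.
by case: enc_x => _ /allP a_lt _ _; exact/a_lt/mem_nth.
Qed.

Definition code_bit c r := CConst (odd (c %/ 2 ^ r)).

(* The type of the input letter is read off the two low bits of its code; the code [4x+1] of
   the variable inside the block of [x^-1] differs from the code [4x+2] of [x^-1] only in
   these two bits. *)
Definition letter_bit w t s r :=
  COr [:: CAnd [:: CNot (block_bit w t 0); CNot (block_bit w t 1);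
                   if s == 0 then block_bit w t r else code_bit e_code r];
          CAnd [:: block_bit w t 0; CNot (block_bit w t 1);
                   if s == 1 then block_bit w t r else code_bit e_code r];
          CAnd [:: CNot (block_bit w t 0); block_bit w t 1;
                   if s %% 3 == 1 then
                     if r == 0 then CConst true else if r == 1 then CConst false
                     else block_bit w t r
                   else code_bit e_code r]].

Lemma div_pow2_4x x a r : a < 4 -> 1 < r -> (4 * x + a) %/ 2 ^ r = x %/ 2 ^ (r - 2).
Proof.
move=> lt_a lt_r; have -> : 2 ^ r = 4 * 2 ^ (r - 2) by rewrite -{1}(subnKC lt_r) expnD.
by rewrite divnMA; congr (_ %/ _); lia.
Qed.

Lemma ceval_letter_bit x w t s r l : block_code x w t = gcode l -> s < K ->
  ceval x (letter_bit w t s r) = odd (scode (Some (nth (inl e) (letter_block e l) s)) %/ 2 ^ r).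
Proof.
move=> code_l lt_s; rewrite nth_letter_block // ceval_COr /= !ceval_block_bit code_l.
rewrite expn0 expn1 divn1 /=.
case: l code_l => [g|[y []]] code_l /=.
- have -> : (4 * enum_rank g) %/ 2 = 2 * enum_rank g by lia.
  by rewrite !oddM /= !andbT orbF; case: ifP => _; rewrite /= ?ceval_block_bit ?code_l.
- have -> : (4 * y + 1) %/ 2 = 2 * y by lia.
  by rewrite oddD !oddM /= !andbT orbF; case: ifP => _; rewrite /= ?ceval_block_bit ?code_l.
have -> : (4 * y + 2) %/ 2 = 2 * y + 1 by lia.
rewrite oddD !oddM /= oddD oddM /= andbT orbF; case: ifP => // _.
case: (ltngtP r 1) => [lt_r | gt_r | ->] /=.
- have -> : r = 0 by lia.
  by rewrite /= divn1 oddD oddM.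
- have -> : (r == 0) = false by apply/negbTE/eqP; lia.
  by rewrite ceval_block_bit code_l /= !div_pow2_4x.
- by rewrite (_ : (4 * y + 1) %/ 2 ^ 1 = 2 * y) ?oddM //; lia.
Qed.

Definition out_code_bit n w q r :=
  if q == 0 then code_bit e_code r
  else if q <= K * n then
    if q.-1 %/ K < num_blocks n w then letter_bit w (q.-1 %/ K) (q.-1 %% K) r
    else code_bit e_code r
  else if q == (K * n).+1 then code_bit 2 r else code_bit e_code r.

Definition out_bit n w i :=
  let W := out_width n in
  if i < W then CConst true else if i == W then CConst false
  else out_code_bit n w ((i - W.+1) %/ W) ((i - W.+1) %% W).

Lemma ceval_out_bit x w a i : encodes G x w a -> i < out_len (size x) ->
  ceval x (out_bit (size x) w i) = nth false (enc (out_width (size x)) (out_codes a (size x))) i.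
Proof.
move=> enc_x lt_i; have [_ le_a] := encodes_le enc_x; have blocks_x := encodes_num_blocks enc_x.
set n := size x in lt_i le_a blocks_x *; set W := out_width n.
have W_gt0 : 0 < W := out_width_gt0 n.
rewrite /out_bit -/W; case: ltnP => [lt_iW | le_Wi]; first by rewrite nth_enc_header.
case: eqP => [-> | ne_iW]; first by rewrite nth_enc_sep.
set j := i - W.+1; have lt_q : j %/ W < K * n + 3.
  by rewrite ltn_divLR // /j; move: lt_i; rewrite /out_len -/W; lia.
have -> : i = block_pos W (j %/ W) (j %% W) by rewrite /block_pos -divn_eq /j; lia.
rewrite nth_enc_block ?size_out_codes ?ltn_pmod // nth_out_codes // /out_code_bit blocks_x.
do 2 (case: ifP => // _); case: ifP => // lt_t; case: enc_x => _ a_lt _ x_enc.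
set t := (j %/ W).-1 %/ K.
have code_t : block_code x w t = gcode (nth (inl e) a t).
  by rewrite {1}x_enc block_code_enc ?size_map ?(nth_map (inl e)) // all_map.
by rewrite (ceval_letter_bit _ code_t) // ltn_pmod // block_len_gt0.
Qed.

(* Bit 0 is the validity test: the image of an invalid input starts with [false], hence
   encodes nothing. *)
Definition reduction_circuit n i :=
  if i == 0 then valid_input G n
  else COr [seq CAnd [:: header w; out_bit n w i] | w <- iota 1 n].

Lemma ceval_reduction_circuit x w a i : encodes G x w a -> i < out_len (size x) ->
  ceval x (reduction_circuit (size x) i)
  = nth false (enc (out_width (size x)) (out_codes a (size x))) i.
Proof.
move=> enc_x lt_i; rewrite /reduction_circuit; case: eqP => [-> | _].
  by rewrite (valid_input_complete enc_x) nth_enc_header // out_width_gt0.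
have [lt_w _] := encodes_le enc_x; have x_enc : x = enc w (map (@gcode S) a) by case: enc_x.
have w_gt0 : 0 < w by case: enc_x.
rewrite ceval_COr; apply/has_ceval_mapP/idP => [[v v_in] | bit_i].
  rewrite ceval_CAnd2 {1}x_enc header_enc // => /andP [/eqP -> out_i].
  by rewrite -(ceval_out_bit enc_x).
exists w; first by rewrite mem_iota w_gt0 add1n ltnS ltnW.
by rewrite ceval_CAnd2 {1}x_enc header_enc // eqxx (ceval_out_bit enc_x).
Qed.

Definition reduction x :=
  mkseq (fun i => ceval x (reduction_circuit (size x) i)) (out_len (size x)).

Lemma reduction_encodes x w a : encodes G x w a ->
  reduction x = enc (out_width (size x)) (out_codes a (size x)).
Proof.
move=> enc_x; have [_ le_a] := encodes_le enc_x.
apply: (@eq_from_nth _ false); first by rewrite size_mkseq size_enc size_out_codes.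
by move=> i; rewrite size_mkseq => lt_i; rewrite nth_mkseq // (ceval_reduction_circuit enc_x).
Qed.

Lemma reduction_head x : nth false (reduction x) 0 = ceval x (valid_input G (size x)).
Proof. by rewrite nth_mkseq // /out_len. Qed.

End Reduction.

(** * Size and depth of the reduction circuits *)

Section ReductionSize.
Variables (S : finType) (G : {set S}) (e : S) (n X : nat).
Hypothesis X_large : n + #|S| + block_len S + 20 <= X.

Let X_gt1 : 1 < X. Proof. lia. Qed.

Let le_X m : m <= n + #|S| + block_len S + 20 -> m <= X ^ 1.
Proof. by rewrite expn1 => le_m; apply: leq_trans X_large. Qed.

Let small_le_X m : m <= 20 -> m <= X ^ 1.
Proof. by move=> le_m; apply: le_X; lia. Qed.

Lemma csize_block_bit w t r : csize (block_bit w t r) <= X ^ 0.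
Proof. by rewrite /block_bit; case: ifP. Qed.

Lemma csize_block_eq w t c : w <= n -> csize (block_eq w t c) <= X ^ 3.
Proof.
move=> le_w; apply: (@csize_CAnd _ _ _ 1 1) => //; first by rewrite size_mkseq le_X //; lia.
by rewrite all_map; apply/allP => r _ /=; case: ifP => _; apply: le_X => /=; lia.
Qed.

Lemma csize_header w : w <= n -> csize (header w) <= X ^ 3.
Proof.
move=> le_w; apply: (@csize_CAnd _ _ _ 1 1) => //=.
  by rewrite size_map size_iota le_X //; lia.
rewrite /= (le_X (_ : 2 <= _)) /=; last lia.
by rewrite all_map; apply/allP => r _ /=; apply: le_X => /=; lia.
Qed.

Lemma csize_code_check w t : w <= n -> csize (code_check G w t) <= X ^ 7.
Proof.
move=> le_w; have bit_small r := csize_block_bit w t r.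
have bit_small1 r : csize (block_bit w t r) <= X ^ 1 := csize_le_pow X_gt1 (bit_small r) isT.
have not_small r := csize_CNot X_gt1 (bit_small r).
have pair_small c0 c1 :
    csize c0 <= X ^ 1 -> csize c1 <= X ^ 1 -> csize (CAnd [:: c0; c1]) <= X ^ 5.
  by move=> c0_small c1_small; apply: (@csize_CAnd _ X_gt1 _ 1 1) => //; apply/and3P.
have eqs_small : csize (COr [seq block_eq w t (4 * enum_rank g) | g <- group_codes G w]) <= X ^ 5.
  apply: (@csize_COr _ X_gt1 _ 1 3) => //.
    rewrite size_map size_filter; apply: le_X; apply: leq_trans (count_size _ _) _.
    by rewrite -cardE; apply: leq_trans (max_card _) _; lia.
  by rewrite all_map; apply/allP => g _; exact: csize_block_eq.
apply: (@csize_COr _ X_gt1 _ 1 5) => //; first by apply: small_le_X.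
by apply/and4P; split; [exact: pair_small | exact: pair_small | exact: eqs_small |].
Qed.

Lemma csize_valid_input : csize (valid_input G n) <= X ^ 11.
Proof.
apply: (@csize_COr _ X_gt1 _ 1 9) => //.
  rewrite size_map size_filter; apply: le_X; apply: leq_trans (count_size _ _) _.
  by rewrite size_iota; lia.
rewrite all_map; apply/allP => w; rewrite mem_filter mem_iota => /andP [/andP [lt_w _] _].
apply: (@csize_CAnd _ X_gt1 _ 1 7) => //.
  rewrite /= size_map size_iota; apply: le_X.
  by have := leq_div (n - w.+1) w; rewrite /num_blocks; lia.
rewrite all_cons; apply/andP; split.
  by apply: (csize_le_pow X_gt1 (csize_header (ltnW lt_w))).
by rewrite /mkseq all_map; apply/allP => t _; exact: csize_code_check (ltnW lt_w).
Qed.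

Lemma csize_letter_bit w t s r : csize (letter_bit e w t s r) <= X ^ 5.
Proof.
have bit_small r' : csize (block_bit w t r') <= X ^ 1.
  by apply: (csize_le_pow X_gt1 (csize_block_bit w t r')).
have not_small r' := csize_CNot X_gt1 (csize_block_bit w t r').
have const_small b : csize (CConst b) <= X ^ 1 by apply: small_le_X.
have code_small c r' : csize (code_bit c r') <= X ^ 1 by apply: small_le_X.
have triple_small c0 c1 c2 : csize c0 <= X ^ 1 -> csize c1 <= X ^ 1 -> csize c2 <= X ^ 1 ->
    csize (CAnd [:: c0; c1; c2]) <= X ^ 3.
  move=> *; apply: (@csize_CAnd _ X_gt1 _ 1 1) => //; first by apply: small_le_X.
  by apply/and4P.
apply: (@csize_COr _ X_gt1 _ 1 3) => //; first by apply: small_le_X.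
by apply/and4P; split => //; apply: triple_small => //; repeat case: ifP => _.
Qed.

Lemma csize_out_bit w i : csize (out_bit e n w i) <= X ^ 5.
Proof.
have const_small b : csize (CConst b) <= X ^ 5 by apply: (@csize_le_pow _ X_gt1 _ 0).
have code_small c r : csize (code_bit c r) <= X ^ 5 by apply: (@csize_le_pow _ X_gt1 _ 0).
by rewrite /out_bit /out_code_bit; repeat case: ifP => _; rewrite ?csize_letter_bit.
Qed.

Lemma csize_reduction_circuit i : csize (reduction_circuit G e n i) <= X ^ 11.
Proof.
rewrite /reduction_circuit; case: ifP => _; first exact: csize_valid_input.
apply: (@csize_COr _ X_gt1 _ 1 9) => //; first by rewrite size_map size_iota; apply: le_X; lia.
rewrite all_map; apply/allP => w; rewrite mem_iota => /andP [_ lt_w].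
apply: (@csize_CAnd _ X_gt1 _ 1 5) => //; apply/and3P; split => //; last exact: csize_out_bit.
by apply: (csize_le_pow X_gt1 (csize_header _)) => //; lia.
Qed.

Lemma out_len_le : out_len S n <= X ^ 4.
Proof.
rewrite /out_len /out_width (_ : X ^ 4 = X * (X * X * X)); last first.
  by rewrite !expnS expn0 muln1 !mulnA.
have le_blocks : block_len S * n + 3 <= X * X.
  apply: leq_trans (_ : (block_len S + 3) * X <= _).
    by rewrite mulnDl leq_add // ?leq_mul2l ?(leq_pmulr 3); lia.
  by rewrite leq_mul2r; apply/orP; right; lia.
have : (n + #|S| + 2) * (block_len S * n + 3) <= X * (X * X) by apply: leq_mul => //; lia.
have : X * (X * X) + X <= X * (X * X * X) by nia.
lia.
Qed.

End ReductionSize.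

Lemma cdepth_block_bit w t r : cdepth (block_bit w t r) = 0.
Proof. by rewrite /block_bit; case: ifP. Qed.

Lemma cdepth_block_eq w t c : cdepth (block_eq w t c) <= 2.
Proof.
by rewrite /block_eq; apply: cdepth_CAnd; rewrite all_map; apply/allP => r _ /=; case: ifP.
Qed.

Lemma cdepth_header w : cdepth (header w) <= 2.
Proof. by rewrite /header; apply: cdepth_CAnd; rewrite /= all_map; apply/allP. Qed.

Lemma cdepth_code_check (S : finType) (G : {set S}) w t : cdepth (code_check G w t) <= 4.
Proof.
rewrite /code_check; apply: cdepth_COr; rewrite /= !cdepth_block_bit /=.
rewrite andbT; apply: (@cdepth_COr _ 2); rewrite all_map; apply/allP => g _.
exact: cdepth_block_eq.
Qed.

Lemma cdepth_valid_input (S : finType) (G : {set S}) n : cdepth (valid_input G n) <= 6.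
Proof.
apply: cdepth_COr; rewrite all_map; apply/allP => w _; apply: cdepth_CAnd.
rewrite all_cons (leq_trans (cdepth_header w)) //= all_map.
by apply/allP => t _; exact: cdepth_code_check.
Qed.

Lemma cdepth_letter_bit (S : finType) (e : S) w t s r : cdepth (letter_bit e w t s r) <= 3.
Proof.
apply: cdepth_COr; rewrite /= !cdepth_block_bit /=.
by repeat case: ifP => _; rewrite /= ?cdepth_block_bit.
Qed.

Lemma cdepth_reduction_circuit (S : finType) (G : {set S}) (e : S) n i :
  cdepth (reduction_circuit G e n i) <= 6.
Proof.
rewrite /reduction_circuit; case: ifP => _; first exact: cdepth_valid_input.
apply: cdepth_COr; rewrite all_map; apply/allP => w _; apply: cdepth_CAnd.
rewrite all_cons (leq_trans (cdepth_header w)) //= andbT.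
rewrite /out_bit /out_code_bit; repeat case: ifP => _ //.
exact: leq_trans (cdepth_letter_bit _ _ _ _ _) _.
Qed.

Lemma reduction_AC0 (S : finType) (G : {set S}) (e : S) : AC0_function (reduction G e).
Proof.
pose C := #|S| + block_len S + 20.
exists 6, (C.+1 * 16), (@out_len S), (fun _ _ => CConst true), (reduction_circuit G e).
split; [|split].
- move=> n; pose X := n + C.
  have X_large : n + #|S| + block_len S + 20 <= X by rewrite /X /C; lia.
  have X_gt1 : 1 < X by rewrite /X /C; lia.
  apply: leq_trans (_ : \sum_(i < out_len S n) X ^ 12 <= _).
    apply: leq_sum => i _; rewrite add1n; apply: (succ_le_pow X_gt1).
    exact: csize_reduction_circuit.
  rewrite sum_nat_const card_ord.
  apply: leq_trans (_ : X ^ 4 * X ^ 12 <= _); first by rewrite leq_mul2r (out_len_le X_large) orbT.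
  by rewrite -expnD expnM leq_exp2r // add_le_pow2.
- by move=> n i _; split => //; exact: cdepth_reduction_circuit.
- move=> x; rewrite size_mkseq; split => // i lt_i; split => // _.
  by rewrite nth_mkseq.
Qed.

Theorem lemma5p3 (S : finType) (op : S -> S -> S) (op_assoc : associative op)
    (G : {set S}) (HG : maximal_subgroup op G) :
  AC0_reducible (EQN_SAT_group op G) (EQN_SAT_semigroup op).
Proof.
have [[_ [e [e_id _]]] _] := HG.
exists (reduction G e); split; first exact: reduction_AC0.
move=> x; split.
- case=> w [a [w_gt0 a_lt a_over x_enc sat]]; have enc_x : encodes G x w a by [].
  exists (out_width S (size x)), (translate e a (size x)), [:: inl e]; split.
  + exact: out_width_gt0.
  + exact: out_codes_lt enc_x.
  + exact: reduction_encodes enc_x.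
  + exact: (translate_sat op_assoc HG e_id _ a_over sat).
- case=> W [u [v [W_gt0 cs_lt red_x sat]]].
  have /valid_input_sound [w [a enc_x]] : ceval x (valid_input G (size x)).
    by rewrite -(reduction_head G e) red_x nth_enc_header.
  have [_ /instance_codes_inj [eq_u eq_v]] := enc_inj (out_width_gt0 _ _) W_gt0
    (out_codes_lt e enc_x) cs_lt (etrans (esym (reduction_encodes e enc_x)) red_x).
  have [_ _ a_over _] := enc_x.
  exists w, a; split; try by case: enc_x.
  by apply: (sat_translate op_assoc HG e_id a_over (n := size x)); rewrite eq_u eq_v.
Qed.
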